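(* For every $(r,s,i,j)\in\mu^{-1}(0)^{rss}$, the closure of the orbit $B\cdot(r,s,i,j)$ contains a point of the form $(\operatorname{diag}(r),d,0,0)$ with $d$ a diagonal matrix.
   Context: $B\subset GL_n(\mathbb{C})$ is the group of invertible upper triangular matrices, $\mathfrak{b}$ the upper triangular matrices, $\mathfrak{n}^+$ strictly upper triangular, $\mathfrak{b}^*=\mathfrak{gl}_n/\mathfrak{n}^+$. $B$ acts on $\mathfrak{b}\times\mathfrak{b}^*\times\mathbb{C}^n\times(\mathbb{C}^n)^*$ by $b\cdot(r,s,i,j)=(brb^{-1},bsb^{-1},bi,jb^{-1})$, with moment map $\mu(r,s,i,j)=[r,s]+ij\bmod\mathfrak{n}^+$; $\mu^{-1}(0)^{rss}$ is the set of zeros of $\mu$ with $r$ having pairwise distinct diagonal entries. $\operatorname{diag}(r)$ is the diagonal matrix with the diagonal entries of $r$. *)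

(* The complex numbers are modelled as R[i] = complex R for
   R : realType (MathComp-Analysis reals; real_closed's `complex`). *)
From HB Require Import structures.
From mathcomp Require Import all_boot all_order all_algebra.
From mathcomp Require Import reals complex.
Set Implicit Arguments. Unset Strict Implicit. Unset Printing Implicit Defensive.
Import Order.TTheory GRing.Theory Num.Theory.
Local Open Scope ring_scope.

Definition upper_trig (F : nzRingType) (n : nat) (A : 'M[F]_n) : Prop :=
  forall k l : 'I_n, (l < k)%N -> A k l = 0.

Definition in_borel (F : comUnitRingType) (n : nat) (b : 'M[F]_n) : Prop :=
  b \in unitmx /\ upper_trig b.

(* Two matrices are equal modulo n^+ (strictly upper triangular matrices),
   i.e. they define the same element of b^* = gl_n / n^+. *)
Definition eq_mod_nplus (F : nzRingType) (n : nat) (A A' : 'M[F]_n) : Prop :=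
  forall k l : 'I_n, (l <= k)%N -> A k l = A' k l.

Definition mu_zero (F : comNzRingType) (n : nat) (r s : 'M[F]_n)
  (i : 'cV[F]_n) (j : 'rV[F]_n) : Prop :=
  eq_mod_nplus (r *m s - s *m r + i *m j) 0.

Definition rss (F : nzRingType) (n : nat) (r : 'M[F]_n) : Prop :=
  forall k l : 'I_n, k != l -> r k k != r l l.

Definition diag_of (F : nzRingType) (n : nat) (r : 'M[F]_n) : 'M[F]_n :=
  diag_mx (\row_k r k k).

From HB Require Import structures.
From mathcomp Require Import all_boot all_order all_algebra.
From mathcomp Require Import reals complex ring.
Import Order.TTheory GRing.Theory Num.Theory.
Local Open Scope ring_scope.

(* As r is upper triangular with distinct diagonal entries, the spectral
   projectors E_k = prod_(m <> k) (r - r_mm) / (r_kk - r_mm) are polynomials in r,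
   hence upper triangular.  The rows k of the E_k form an element u of B whose
   inverse has the columns l of the E_l, and u r u^-1 = diag(r).  As mu is
   B-equivariant we may thus assume r = diag(d), where mu = 0 reads
   (d_k - d_l) s_kl + i_k j_l = 0 for l <= k.  So i_k j_k = 0, and s_kl <> 0 with
   l < k forces i_k <> 0 <> j_l, hence i_l = 0.  Conjugating by the torus element
   with entry t where i_k <> 0 and t^-1 elsewhere fixes diag(d) and the diagonal
   of s, multiplies i and j by t and the strictly lower part of s by t^2; letting
   t -> 0 gives (diag(d), diag(s), 0, 0). *)

Section UpperTriangular.
Context {R : comNzRingType} {n : nat}.
Implicit Types (A B M : 'M[R]_n).

Lemma upper_trigM A B : upper_trig A -> upper_trig B -> upper_trig (A *m B).
Proof.
move=> hA hB k l lk; rewrite mxE big1 // => m _.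
have [mk|km] := ltnP m k; first by rewrite hA ?mul0r.
by rewrite hB ?mulr0 // (leq_trans lk km).
Qed.

Lemma mulmx_upper_diag A B k :
  upper_trig A -> upper_trig B -> (A *m B) k k = A k k * B k k.
Proof.
move=> hA hB; rewrite mxE (bigD1 k) //= big1 ?addr0 // => m mk.
have [mk'|km] := ltnP m k; first by rewrite hA ?mul0r.
by rewrite hB ?mulr0 // ltn_neqAle km andbT eq_sym.
Qed.

Lemma is_diag_mx_upper A : is_diag_mx A -> upper_trig A.
Proof. by move=> /is_diag_mxP hA k l lk; rewrite hA // neq_ltn lk orbT. Qed.

Lemma upper_trigZ c A : upper_trig A -> upper_trig (c *: A).
Proof. by move=> hA k l lk; rewrite mxE hA ?mulr0. Qed.

Lemma upper_trig_subr_scalar A c : upper_trig A -> upper_trig (A - c%:M).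
Proof.
move=> hA k l lk; rewrite !mxE hA //; case: eqP => [ekl|_]; last by rewrite subr0.
by rewrite ekl ltnn in lk.
Qed.

Lemma eq_mod_nplus0_conj B M C :
  upper_trig B -> upper_trig C -> eq_mod_nplus M 0 -> eq_mod_nplus (B *m M *m C) 0.
Proof.
move=> hB hC hM k l lk; rewrite [RHS]mxE mxE big1 // => m _.
have [lm|ml] := ltnP l m; first by rewrite hC ?mulr0.
rewrite mxE big1 ?mul0r // => p _.
have [pk|kp] := ltnP p k; first by rewrite hB ?mul0r.
by rewrite hM ?mxE ?mulr0 // (leq_trans ml (leq_trans lk kp)).
Qed.

Lemma char_poly_upper A : upper_trig A -> char_poly A = \prod_(k < n) ('X - (A k k)%:P).
Proof.
move=> hA; rewrite /char_poly -det_tr det_trig.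
  by apply: eq_bigr => k _; rewrite !mxE eqxx.
apply/is_trig_mxP => k l kl; rewrite !mxE hA // eq_sym.
by case: eqP => [elk|_]; [rewrite elk ltnn in kl | rewrite subr0].
Qed.

End UpperTriangular.

Section UpperProd.
Context {R : comNzRingType} {n : nat} {I : Type} (s : seq I) (P : pred I).
Variable A : I -> 'M[R]_n.+1.
Hypothesis hA : forall x, upper_trig (A x).

Lemma upper_trig_prod : upper_trig (\prod_(x <- s | P x) A x).
Proof.
elim/big_ind: _ => [|M N hM hN|x _]; last exact: hA.
  exact/is_diag_mx_upper/scalar_mx_is_diag.
by rewrite -mulmxE; exact: upper_trigM.
Qed.

Lemma prod_upper_diag k : (\prod_(x <- s | P x) A x) k k = \prod_(x <- s | P x) A x k k.
Proof.
pose K (M : 'M[R]_n.+1) (a : R) := upper_trig M /\ M k k = a.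
suff [] : K (\prod_(x <- s | P x) A x) (\prod_(x <- s | P x) A x k k) by [].
apply: big_ind2 => [|M a N b [hM <-] [hN <-]|x _]; last by split.
  by split; [exact/is_diag_mx_upper/scalar_mx_is_diag | rewrite mxE eqxx].
by rewrite /K -mulmxE mulmx_upper_diag //; split; first exact: upper_trigM.
Qed.

End UpperProd.

Definition eig_proj {F : fieldType} {n : nat} (r : 'M[F]_n.+1) (k : 'I_n.+1) :
    'M[F]_n.+1 :=
  (\prod_(m | m != k) (r k k - r m m))^-1 *: \prod_(m | m != k) (r - (r m m)%:M).

Section EigenProjectors.
Context {F : fieldType} {n : nat} (r : 'M[F]_n.+1).
Hypothesis hr : upper_trig r.

Lemma horner_mx_XsubC c : horner_mx r ('X - c%:P) = r - c%:M.
Proof. by rewrite rmorphB /= horner_mx_X horner_mx_C. Qed.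

Lemma horner_mx_prod_XsubC (P : pred 'I_n.+1) :
  horner_mx r (\prod_(m | P m) ('X - (r m m)%:P)) = \prod_(m | P m) (r - (r m m)%:M).
Proof.
by rewrite rmorph_prod; apply: eq_bigr => m _; apply: horner_mx_XsubC.
Qed.

Lemma eig_proj_upper k : upper_trig (eig_proj r k).
Proof. by apply/upper_trigZ/upper_trig_prod => m; apply: upper_trig_subr_scalar. Qed.

Lemma eig_proj_diag k : rss r -> eig_proj r k k k = 1.
Proof.
move=> hs; rewrite mxE prod_upper_diag => [|m]; last exact: upper_trig_subr_scalar.
under [X in _ * X]eq_bigr => m _ do rewrite !mxE eqxx mulr1n.
by rewrite mulVf //; apply/prodf_neq0 => m mk; rewrite subr_eq0 hs // eq_sym.
Qed.

Lemma eig_proj_eigen k :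
  r *m eig_proj r k = r k k *: eig_proj r k /\ eig_proj r k *m r = r k k *: eig_proj r k.
Proof.
rewrite /eig_proj -scalemxAr -scalemxAl.
set P := \prod_(m | m != k) (r - _).
have CH := Cayley_Hamilton r; rewrite char_poly_upper // (bigD1 k) //= in CH.
have kerP : (r - (r k k)%:M) * P = 0.
  by rewrite -CH rmorphM /= horner_mx_XsubC horner_mx_prod_XsubC.
have kerP' : P * (r - (r k k)%:M) = 0.
  by rewrite -CH mulrC rmorphM /= horner_mx_XsubC horner_mx_prod_XsubC.
move: kerP kerP'; rewrite mulrBl mulrBr -!mulmxE mul_scalar_mx mul_mx_scalar.
move=> /eqP; rewrite subr_eq0 => /eqP rP /eqP; rewrite subr_eq0 => /eqP Pr.
by rewrite rP Pr !scalerA mulrC.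
Qed.

Lemma eig_proj_orth k l : rss r -> k != l -> eig_proj r k *m eig_proj r l = 0.
Proof.
move=> hs kl; have [rE _] := eig_proj_eigen l; have [_ Er] := eig_proj_eigen k.
have : (r k k - r l l) *: (eig_proj r k *m eig_proj r l) = 0.
  by rewrite scalerBl [r k k *: _]scalemxAl -Er [r l l *: _]scalemxAr -rE mulmxA subrr.
by move/eqP; rewrite scaler_eq0 subr_eq0 (negbTE (hs _ _ kl)) => /eqP.
Qed.

End EigenProjectors.

Definition left_eig_mx {F : fieldType} {n : nat} (r : 'M[F]_n.+1) : 'M[F]_n.+1 :=
  \matrix_(k, l) eig_proj r k k l.

Definition right_eig_mx {F : fieldType} {n : nat} (r : 'M[F]_n.+1) : 'M[F]_n.+1 :=
  \matrix_(k, l) eig_proj r l k l.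

Section EigenBasis.
Context {F : fieldType} {n : nat} (r : 'M[F]_n.+1).
Hypotheses (hr : upper_trig r) (hs : rss r).

Lemma left_eig_mx_upper : upper_trig (left_eig_mx r).
Proof. by move=> k l lk; rewrite mxE eig_proj_upper. Qed.

Lemma right_eig_mx_upper : upper_trig (right_eig_mx r).
Proof. by move=> k l lk; rewrite mxE eig_proj_upper. Qed.

Lemma left_eig_mxP : left_eig_mx r *m r = diag_of r *m left_eig_mx r.
Proof.
apply/matrixP => k l; rewrite mul_diag_mx !mxE.
have [_ Er] := eig_proj_eigen r hr k.
transitivity ((eig_proj r k *m r) k l); last by rewrite Er !mxE.
by rewrite mxE; apply: eq_bigr => m _; rewrite !mxE.
Qed.

Lemma mulmx_left_right_eig : left_eig_mx r *m right_eig_mx r = 1%:M.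
Proof.
apply/matrixP => k l.
transitivity ((eig_proj r k *m eig_proj r l) k l).
  by rewrite !mxE; apply: eq_bigr => m _; rewrite !mxE.
have [<-|kl] := eqVneq k l.
  rewrite mulmx_upper_diag; try exact: eig_proj_upper.
  by rewrite eig_proj_diag // mulr1 mxE eqxx.
by rewrite eig_proj_orth // !mxE (negbTE kl).
Qed.

End EigenBasis.

Lemma invmx_eq {R : comUnitRingType} {n : nat} {A B : 'M[R]_n} :
  A *m B = 1%:M -> invmx A = B.
Proof. by move=> AB; have [uA _] := mulmx1_unit AB; rewrite -[B](mulKmx uA) AB mulmx1. Qed.

Lemma upper_diagonalization {F : fieldType} {n : nat} (r : 'M[F]_n) :
  upper_trig r -> rss r ->
  exists u, [/\ in_borel u, upper_trig (invmx u) & u *m r *m invmx u = diag_of r].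
Proof.
case: n r => [|n] r hr hs.
  exists 1%:M; rewrite invmx1; split; last by apply/matrixP => -[].
  - by split; [exact: unitmx1 | exact/is_diag_mx_upper/scalar_mx_is_diag].
  - exact/is_diag_mx_upper/scalar_mx_is_diag.
have uv := mulmx_left_right_eig r hr hs.
exists (left_eig_mx r); rewrite (invmx_eq uv); split.
- by split; [exact: (mulmx1_unit uv).1 | exact: left_eig_mx_upper _ hr].
- exact: right_eig_mx_upper _ hr.
- by rewrite left_eig_mxP // -mulmxA uv mulmx1.
Qed.

Lemma in_borelM {R : comUnitRingType} {n : nat} (b c : 'M[R]_n) :
  in_borel b -> in_borel c -> in_borel (b *m c).
Proof. by move=> [ub hb] [uc hc]; split; [rewrite unitmx_mul ub | exact: upper_trigM]. Qed.

Lemma mu_zero_conj {R : comUnitRingType} {n : nat} {b r s : 'M[R]_n} {i j} :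
  in_borel b -> upper_trig (invmx b) -> mu_zero r s i j ->
  mu_zero (b *m r *m invmx b) (b *m s *m invmx b) (b *m i) (j *m invmx b).
Proof.
move=> [ub hb] hb' hmu; set c := invmx b.
have conjM (X Y : 'M[R]_n) : b *m X *m c *m (b *m Y *m c) = b *m (X *m Y) *m c.
  by rewrite !mulmxA mulmxKV.
rewrite /mu_zero; suff -> : b *m r *m c *m (b *m s *m c) - b *m s *m c *m (b *m r *m c)
    + b *m i *m (j *m c) = b *m (r *m s - s *m r + i *m j) *m c.
  exact: eq_mod_nplus0_conj.
by rewrite mulmxDr mulmxBr mulmxDl mulmxBl -!conjM !mulmxA.
Qed.

(* (r0, s0, 0, 0) lies in the closure of B.(r, s, i, j); the b^*-component is
   compared on and below the diagonal only. *)
Definition in_orbit_closure {R : numDomainType} {n : nat} (r0 s0 r s : 'M[R]_n)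
    (i : 'cV[R]_n) (j : 'rV[R]_n) : Prop :=
  forall eps : R, 0 < eps ->
    exists b : 'M[R]_n, in_borel b /\
      (forall k l : 'I_n, `|(b *m r *m invmx b) k l - r0 k l| < eps) /\
      (forall k l : 'I_n, (l <= k)%N -> `|(b *m s *m invmx b) k l - s0 k l| < eps) /\
      (forall k : 'I_n, `|(b *m i) k 0| < eps) /\
      (forall k : 'I_n, `|(j *m invmx b) 0 k| < eps).

Lemma in_orbit_closure_conj {R : numDomainType} {n : nat} {b0 r0 s0 r s : 'M[R]_n} {i j} :
  in_borel b0 ->
  in_orbit_closure r0 s0 (b0 *m r *m invmx b0) (b0 *m s *m invmx b0)
    (b0 *m i) (j *m invmx b0) ->
  in_orbit_closure r0 s0 r s i j.
Proof.
move=> hb0 + eps eps0 => /(_ eps eps0) [b [hb [closer [closes [closei closej]]]]].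
have ib : invmx (b *m b0) = invmx b0 *m invmx b.
  have [[ub _] [ub0 _]] := (hb, hb0).
  by apply: invmx_eq; rewrite -mulmxA (mulmxA b0) mulmxV // mul1mx mulmxV.
exists (b *m b0); rewrite ib; split; first exact: in_borelM.
split; first by move=> k l; move: (closer k l); rewrite !mulmxA.
split; first by move=> k l lk; move: (closes k l lk); rewrite !mulmxA.
by split=> k; [move: (closei k) | move: (closej k)]; rewrite !mulmxA.
Qed.

Lemma small_scale {F : numFieldType} (ys : seq F) (eps : F) :
  0 < eps -> exists2 t : F, 0 < t <= 1 & forall y, y \in ys -> t * `|y| < eps.
Proof.
move=> eps0; set S := \sum_(y <- ys) `|y|.
have S0 : 0 <= S by apply: sumr_ge0.
have epsS0 : 0 < eps + S by rewrite ltr_wpDr.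
exists (eps / (eps + S)) => [|y ys_y].
  by rewrite divr_gt0 //= ler_pdivrMr // mul1r lerDl.
have yS : `|y| <= S by rewrite /S (big_rem y) //= lerDl sumr_ge0.
by rewrite mulrAC ltr_pdivrMr // ltr_pM2l // ltr_pwDl.
Qed.

Definition torus_weight {F : fieldType} {n : nat} (i : 'cV[F]_n) (t : F) (k : 'I_n) : F :=
  if i k 0 != 0 then t else t^-1.

Lemma torus_weight_neq0 {F : fieldType} {n : nat} (i : 'cV[F]_n) t k :
  t != 0 -> torus_weight i t k != 0.
Proof. by rewrite /torus_weight; case: ifP; rewrite ?invr_eq0. Qed.

Section DiagonalMomentMap.
Context {F : fieldType} {n : nat}.
Context {d : 'rV[F]_n} {s : 'M[F]_n} {i : 'cV[F]_n} {j : 'rV[F]_n}.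
Hypotheses (hd : forall k l, k != l -> d 0 k != d 0 l) (hmu : mu_zero (diag_mx d) s i j).

Lemma mu_zero_diag_mxE {k l : 'I_n} :
  (l <= k)%N -> (d 0 k - d 0 l) * s k l + i k 0 * j 0 l = 0.
Proof.
move=> lk; have := hmu k l lk; rewrite mul_diag_mx mul_mx_diag !mxE big_ord1 => <-.
by rewrite mulrBl [s k l * _]mulrC.
Qed.

Lemma mul_ij_diag (k : 'I_n) : i k 0 * j 0 k = 0.
Proof. by have := mu_zero_diag_mxE (leqnn k); rewrite subrr mul0r add0r. Qed.

Lemma lower_support {k l : 'I_n} : (l < k)%N -> s k l != 0 -> i k 0 != 0 /\ j 0 l != 0.
Proof.
move=> lk skl; have kl : k != l by rewrite -val_eqE /= (gtn_eqF lk).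
suff : i k 0 * j 0 l != 0 by rewrite mulf_eq0 negb_or => /andP.
apply: contra skl => /eqP ij0; have := mu_zero_diag_mxE (ltnW lk).
by rewrite ij0 addr0 => /eqP; rewrite mulf_eq0 subr_eq0 (negbTE (hd _ _ kl)).
Qed.

Variable t : F.

Lemma torus_weight_i (k : 'I_n) : torus_weight i t k * i k 0 = t * i k 0.
Proof. by rewrite /torus_weight; case: ifPn => // /negPn /eqP ->; rewrite !mulr0. Qed.

Lemma torus_weight_j (k : 'I_n) : j 0 k / torus_weight i t k = t * j 0 k.
Proof.
rewrite /torus_weight; case: ifPn => [ik|_]; last by rewrite invrK mulrC.
by have /eqP := mul_ij_diag k; rewrite mulf_eq0 (negbTE ik) => /eqP ->; rewrite mul0r mulr0.
Qed.

Lemma torus_weight_s {k l : 'I_n} : (l < k)%N ->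
  torus_weight i t k * s k l / torus_weight i t l = t ^+ 2 * s k l.
Proof.
move=> lk; have [->|skl] := eqVneq (s k l) 0; first by rewrite !(mulr0, mul0r).
have [ik jl] := lower_support lk skl.
have il : i l 0 = 0.
  by have /eqP := mul_ij_diag l; rewrite mulf_eq0 (negbTE jl) orbF => /eqP.
by rewrite /torus_weight ik il eqxx /= invrK; ring.
Qed.

End DiagonalMomentMap.

Lemma in_orbit_closure_diag {F : numFieldType} {n : nat} (d : 'rV[F]_n) s i j :
  (forall k l, k != l -> d 0 k != d 0 l) -> mu_zero (diag_mx d) s i j ->
  in_orbit_closure (diag_mx d) (diag_of s) (diag_mx d) s i j.
Proof.
move=> hd hmu eps eps0.
set ys := [seq i k 0 | k <- enum 'I_n] ++ [seq j 0 k | k <- enum 'I_n]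
  ++ [seq s kl.1 kl.2 | kl <- enum {: 'I_n * 'I_n}].
have [t /andP [t0 t1] small] := small_scale ys _ eps0.
have mem_i k : i k 0 \in ys by rewrite !mem_cat (map_f (fun k => i k 0)) ?mem_enum.
have mem_j k : j 0 k \in ys by rewrite !mem_cat (map_f (fun k => j 0 k)) ?mem_enum ?orbT.
have mem_s k l : s k l \in ys.
  by rewrite !mem_cat (map_f (fun kl : 'I_n * 'I_n => s kl.1 kl.2) (mem_enum _ (k, l))) !orbT.
have small_t y : y \in ys -> `|t * y| < eps by rewrite normrM gtr0_norm //; apply: small.
set w := \row_k torus_weight i t k; set w' := \row_k (torus_weight i t k)^-1.
have w0 k : torus_weight i t k != 0 by rewrite torus_weight_neq0 ?gt_eqF.
have ww' : diag_mx w *m diag_mx w' = 1%:M.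
  by rewrite mulmx_diag; apply/matrixP => k l; rewrite !mxE mulfV.
have conjE (X : 'M[F]_n) k l : (diag_mx w *m X *m diag_mx w') k l
    = torus_weight i t k * X k l / torus_weight i t l.
  by rewrite mul_mx_diag mul_diag_mx !mxE.
have conj_diag k x : torus_weight i t k * x / torus_weight i t k = x.
  by rewrite mulrAC mulfV ?mul1r.
exists (diag_mx w); rewrite (invmx_eq ww'); split.
  by split; [exact: (mulmx1_unit ww').1 | exact/is_diag_mx_upper/diag_mx_is_diag].
split=> [k l|].
  rewrite conjE !mxE; case: eqP => [->|_]; first by rewrite mulr1n conj_diag subrr normr0.
  by rewrite !(mulr0n, mulr0, mul0r, subrr, normr0).
split=> [k l lk|].
  rewrite conjE !mxE; have [<-|kl] := eqVneq k l.
    by rewrite mulr1n conj_diag subrr normr0.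
  have {}lk : (l < k)%N by rewrite ltn_neqAle lk andbT eq_sym.
  rewrite mulr0n subr0 (torus_weight_s hd hmu) // normrM ger0_norm ?exprn_ge0 ?ltW //.
  apply: le_lt_trans (small _ (mem_s k l)).
  by rewrite expr2 -mulrA; apply: ler_piMl => //; rewrite mulr_ge0 // ltW.
split=> k; first by rewrite mul_diag_mx !mxE torus_weight_i small_t.
by rewrite mul_mx_diag !mxE (torus_weight_j hmu) small_t.
Qed.

Theorem mainTheorem18 (R : realType) (n : nat)
  (r s : 'M[R[i]]_n) (i : 'cV[R[i]]_n) (j : 'rV[R[i]]_n) :
  upper_trig r -> mu_zero r s i j -> rss r ->
  exists d : 'M[R[i]]_n, is_diag_mx d /\
    forall eps : R[i], 0 < eps ->
      exists b : 'M[R[i]]_n, in_borel b /\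
        (forall k l : 'I_n,
           `|(b *m r *m invmx b) k l - diag_of r k l| < eps) /\
        (forall k l : 'I_n, (l <= k)%N ->
           `|(b *m s *m invmx b) k l - d k l| < eps) /\
        (forall k : 'I_n, `|(b *m i) k 0 | < eps) /\
        (forall k : 'I_n, `|(j *m invmx b) 0 k| < eps).
Proof.
move=> hr hmu hs.
have [u [hu hu' diag_u]] := upper_diagonalization r hr hs.
exists (diag_of (u *m s *m invmx u)); split; first exact: diag_mx_is_diag.
change (in_orbit_closure (diag_of r) (diag_of (u *m s *m invmx u)) r s i j).
apply: (in_orbit_closure_conj hu); rewrite diag_u.
apply: in_orbit_closure_diag => [k l kl|]; first by rewrite !mxE hs.
by move: (mu_zero_conj hu hu' hmu); rewrite diag_u.
Qed.
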